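(* There exist infinitely many EPS-graphs.
   Context: All graphs are finite and simple. $\mathcal{C}$ is the family of complete graphs; $\iota(J)$ is the family of graphs isomorphic to induced subgraphs of $J$; $\mathcal{F}_1\vee\mathcal{F}_2$ (resp. $\mathcal{F}_1\wedge\mathcal{F}_2$) is the family of disjoint unions (resp. joins) of a graph in $\mathcal{F}_1$ and a graph in $\mathcal{F}_2$; $S_2$ is the edgeless graph on $2$ vertices, $K_2$ an edge. $\mathcal{C}^+$ is the family of graphs $G$ that are complete or such that $G\setminus v$ is complete for some $v\in V(G)$ with $\deg(v)\le1$. For a positive integer $l$, a graph $H$ is an $l$-EPS-graph if: (EPS1) for every $1\le s\le l$, $V(H)$ can be partitioned into $s$ stable sets and $l-s$ cliques; (EPS2) for each $\mathcal{G}\in\{\iota(S_2)\vee\mathcal{C},\iota(K_2)\vee\mathcal{C},\iota(S_2)\wedge\mathcal{C},\mathcal{C}^+\}$, $V(H)$ can be partitioned into $l-1$ cliques and a set inducing a graph in $\mathcal{G}$; (EPS3) there is no partition $(X_1,\dots,X_l)$ of $V(H)$ such that $H[X_1]$ is a clique or the complement of a star $K_{1,m}$, and $X_i$ is a clique for $2\le i\le l$. An EPS-graph is an $l$-EPS-graph for some positive integer $l$. *)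

From mathcomp Require Import all_boot.
Set Implicit Arguments. Unset Strict Implicit. Unset Printing Implicit Defensive.

Section EPS.
Variables (T : finType) (e : rel T).

Definition simple_graph : Prop := symmetric e /\ irreflexive e.

Definition stableS (S : {set T}) : Prop :=
  forall x y, x \in S -> y \in S -> ~~ e x y.

Definition cliqueS (S : {set T}) : Prop :=
  forall x y, x \in S -> y \in S -> x != y -> e x y.

(* the i-th part of a partition given as a function into 'I_l
   (parts may be empty) *)
Definition part l (f : T -> 'I_l) (i : 'I_l) : {set T} := [set x | f x == i].

(* X induces a graph in iota(S_2) \/ C : disjoint union of an edgeless graph
   on at most 2 vertices and a complete graph *)
Definition in_S2_or_C (X : {set T}) : Prop :=
  exists A B : {set T}, [/\ X = A :|: B, [disjoint A & B],
    stableS A /\ #|A| <= 2, cliqueS B &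
    forall x y, x \in A -> y \in B -> ~~ e x y].

Definition in_K2_or_C (X : {set T}) : Prop :=
  exists A B : {set T}, [/\ X = A :|: B, [disjoint A & B],
    cliqueS A /\ #|A| <= 2, cliqueS B &
    forall x y, x \in A -> y \in B -> ~~ e x y].

Definition in_S2_join_C (X : {set T}) : Prop :=
  exists A B : {set T}, [/\ X = A :|: B, [disjoint A & B],
    stableS A /\ #|A| <= 2, cliqueS B &
    forall x y, x \in A -> y \in B -> e x y].

Definition in_Cplus (X : {set T}) : Prop :=
  cliqueS X \/
  exists v, [/\ v \in X, cliqueS (X :\ v) & #|[set y in X | e v y]| <= 1].

(* X induces the complement of a star K_{1,m}: an isolated vertex plus
   a complete graph on the remaining vertices *)
Definition co_star (X : {set T}) : Prop :=
  exists v, [/\ v \in X, cliqueS (X :\ v) & forall y, y \in X -> ~~ e v y].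

Definition EPS1 (l : nat) : Prop :=
  forall s, 1 <= s <= l -> exists f : T -> 'I_l,
    forall i : 'I_l, (i < s -> stableS (part f i)) /\ (s <= i -> cliqueS (part f i)).

Definition cliques_plus (l : nat) (P : {set T} -> Prop) : Prop :=
  exists f : T -> 'I_l, forall i : 'I_l,
    (i == 0 :> nat -> P (part f i)) /\ (0 < i -> cliqueS (part f i)).

Definition EPS2 (l : nat) : Prop :=
  [/\ cliques_plus l in_S2_or_C, cliques_plus l in_K2_or_C,
      cliques_plus l in_S2_join_C & cliques_plus l in_Cplus].

Definition EPS3 (l : nat) : Prop :=
  ~ cliques_plus l (fun X => cliqueS X \/ co_star X).

Definition l_EPS_graph (l : nat) : Prop := [/\ 0 < l, EPS1 l, EPS2 l & EPS3 l].

Definition EPS_graph : Prop := exists l, l_EPS_graph l.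

End EPS.

From mathcomp Require Import all_boot zify.
Set Implicit Arguments. Unset Strict Implicit. Unset Printing Implicit Defensive.

(* For every k, a graph G on 9 + 2k vertices is a (k+3)-EPS-graph: a core
   graph on {0, ..., 6}, a stable set T = {7, ..., 8+k} of size k+2 and a
   stable set X = {9+k, ..., 8+2k} of size k, every vertex of T being adjacent
   to 0, 1, 2 and to all of X.  For EPS3, a stable set meets each of the k+2 clique parts at most
   once, so a stable set of size k+3 meets part 0 and one of size k+4 meets it
   twice.  The stable sets {3,6} ∪ T
   and {4,5} ∪ T therefore rule out a clique and force part 0 to be a co-star
   centred in T, hence disjoint from {0,1,2} ∪ X; the stable sets {0,2,6} ∪ X
   and {1,2,4} ∪ X then put 6 and 4 into part 0 minus its centre, a clique,
   although 4 and 6 are not adjacent. *)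

Section StableSetsAndCliques.
Variables (T : finType) (e : rel T).

Lemma stableS_sub (A B : {set T}) : A \subset B -> stableS e B -> stableS e A.
Proof. by move=> /subsetP AB stB x y /AB xB /AB yB; apply: stB. Qed.

Lemma stableSU (A B : {set T}) : symmetric e ->
  stableS e A -> stableS e B -> (forall x y, x \in A -> y \in B -> ~~ e x y) ->
  stableS e (A :|: B).
Proof.
move=> e_sym stA stB AB x y; rewrite !inE => /orP[xA|xB] /orP[yA|yB].
- exact: stA.
- exact: AB.
- by rewrite e_sym; apply: AB.
- exact: stB.
Qed.

Lemma card_stable_clique_le1 (U C : {set T}) :
  stableS e U -> cliqueS e C -> #|U :&: C| <= 1.
Proof.
move=> stU clC; apply/card_le1_eqP => x y; rewrite !inE => /andP[xU xC] /andP[yU yC].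
by case: (eqVneq x y) => // xy; move: (stU x y xU yU); rewrite clC.
Qed.

Lemma card_stable_clique_setD1_le1 (U P : {set T}) v :
  stableS e U -> cliqueS e (P :\ v) -> v \notin U -> #|U :&: P| <= 1.
Proof.
move=> stU clP vU; apply: leq_trans (card_stable_clique_le1 stU clP).
apply/subset_leq_card/subsetP => x; rewrite !inE => /andP[xU ->].
by rewrite xU andbT; apply: contraNneq vU => <-.
Qed.

Lemma card_stable_cliques l (f : T -> 'I_l.+1) (U : {set T}) :
  (forall i : 'I_l.+1, 0 < i -> cliqueS e (part f i)) -> stableS e U ->
  #|U| <= #|U :&: part f ord0| + l.
Proof.
move=> cl stU; rewrite -(cardsID (part f ord0) U) leq_add2l.
have f_inj : {in U :\: part f ord0 &, injective f}.
  move=> x y; rewrite !inE => /andP[xP0 xU] /andP[_ yU] fxy.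
  case: (eqVneq x y) => // xy; move: (stU x y xU yU).
  by rewrite (cl (f x)) ?inE ?fxy // lt0n -fxy.
apply: (@leq_trans #|[set~ @ord0 l]|); last by rewrite cardsC1 card_ord.
rewrite -(card_in_imset f_inj) subset_leq_card //; apply/subsetP => _ /imsetP[x + ->].
by rewrite !inE => /andP[].
Qed.

End StableSetsAndCliques.

Lemma nth_lt_all (s : seq nat) m v : all (fun c => c < m.+1) s -> nth 0 s v < m.+1.
Proof.
move=> s_lt; case: (ltnP v (size s)) => [v_lt|v_ge]; last by rewrite nth_default.
exact: (allP s_lt _ (mem_nth 0 v_lt)).
Qed.

Section Construction.
Variable k : nat.

Definition n_vertices := 9 + k + k.
Definition is_T (v : nat) := 7 <= v < 9 + k.
Definition is_X (v : nat) := 9 + k <= v.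

Definition core_edges : seq (nat * nat) :=
  [:: (0, 1); (0, 3); (0, 4); (0, 5); (1, 5); (1, 6); (5, 6); (3, 4); (2, 3)].

Definition adj (x y : nat) : bool :=
  [|| (x, y) \in core_edges, (y, x) \in core_edges,
      is_T x && ((y < 3) || is_X y) | is_T y && ((x < 3) || is_X x)].

Definition G : rel 'I_n_vertices := fun x y => adj x y.

Lemma core_edge_lt7 p : p \in core_edges -> (p.1 < 7) && (p.2 < 7).
Proof. by move: p; apply/allP. Qed.

Lemma core_edge_neq p : p \in core_edges -> p.1 != p.2.
Proof. by move: p; apply/allP. Qed.

Lemma adjC : symmetric adj.
Proof.
move=> x y; rewrite /adj.
by case: ((x, y) \in _); case: ((y, x) \in _); rewrite //= orbC.
Qed.

Lemma adjxx : irreflexive adj.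
Proof.
move=> x; rewrite /adj orbA !orbb.
have -> : (x, x) \in core_edges = false by apply/negP => /core_edge_neq /eqP.
rewrite /is_T /is_X; lia.
Qed.

Lemma G_sym : symmetric G.
Proof. by move=> x y; apply: adjC. Qed.

Lemma simple_G : simple_graph G.
Proof. by split=> [|x]; [apply: G_sym | apply: adjxx]. Qed.

Lemma adj_noncore x y : 7 <= y ->
  adj x y = is_T x && ((y < 3) || is_X y) || is_T y && ((x < 3) || is_X x).
Proof.
move=> y7; have /negbTE y_nc : (x, y) \notin core_edges.
  by apply/negP => /core_edge_lt7 /=; lia.
have /negbTE y_nc' : (y, x) \notin core_edges.
  by apply/negP => /core_edge_lt7 /=; lia.
by rewrite /adj y_nc y_nc'.
Qed.

Lemma adj_TT x y : is_T x -> is_T y -> adj x y = false.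
Proof. by rewrite /is_T => Tx Ty; rewrite adj_noncore /is_T /is_X; lia. Qed.

Lemma adj_XX x y : is_X x -> is_X y -> adj x y = false.
Proof. by rewrite /is_X => Xx Xy; rewrite adj_noncore /is_T /is_X; lia. Qed.

Lemma adj_TX x y : is_T x -> is_X y -> adj x y.
Proof. by rewrite /is_T /is_X => Tx Xy; rewrite adj_noncore /is_T /is_X; lia. Qed.

Lemma adj_coreT x y : x < 7 -> is_T y -> adj x y = (x < 3).
Proof. by rewrite /is_T => x7 Ty; rewrite adj_noncore /is_T /is_X; lia. Qed.

Lemma adj_coreX x y : x < 7 -> is_X y -> adj x y = false.
Proof. by rewrite /is_X => x7 Xy; rewrite adj_noncore /is_T /is_X; lia. Qed.

Lemma vertex_lt (x : 'I_n_vertices) : x < 9 + k + k.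
Proof. exact: ltn_ord. Qed.

(* Vertex sets are given by lists of numbers, so that stability and
   completeness of concrete small sets are decided by computation. *)
Definition verts (s : seq nat) : {set 'I_n_vertices} :=
  [set x : 'I_n_vertices | (x : nat) \in s].
Definition Tset := verts (iota 7 k.+2).
Definition Xset := verts (iota (9 + k) k).

Lemma mem_Tset x : (x \in Tset) = is_T x.
Proof. by rewrite inE mem_iota /is_T; lia. Qed.

Lemma mem_Xset (x : 'I_n_vertices) : (x \in Xset) = is_X x.
Proof. by rewrite inE mem_iota /is_X; have := vertex_lt x; lia. Qed.

Lemma verts_cat s t : verts (s ++ t) = verts s :|: verts t.
Proof. by apply/setP => x; rewrite !inE mem_cat. Qed.

Lemma card_verts_le s : #|verts s| <= size s.
Proof.
rewrite cardE -(size_map (@nat_of_ord _)) uniq_leq_size //.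
  by rewrite (map_inj_uniq (@ord_inj _)) enum_uniq.
by move=> _ /mapP[x + ->]; rewrite mem_enum inE.
Qed.

Lemma card_verts s : uniq s -> all (fun v => v < n_vertices) s -> #|verts s| = size s.
Proof.
move=> s_uniq /allP s_lt; rewrite cardE -(size_map (@nat_of_ord _)); apply: perm_size.
apply: uniq_perm => //; first by rewrite (map_inj_uniq (@ord_inj _)) enum_uniq.
move=> v; apply/mapP/idP => [[x + ->]|sv]; first by rewrite mem_enum inE.
by exists (Ordinal (s_lt v sv)); rewrite // mem_enum inE.
Qed.

Lemma card_verts_U_iota s m n : uniq s -> all (fun v => v < m) s -> m + n <= n_vertices ->
  #|verts s :|: verts (iota m n)| = size s + n.
Proof.
move=> s_uniq /allP s_lt mn_le; rewrite -verts_cat card_verts ?size_cat ?size_iota //.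
  rewrite cat_uniq s_uniq iota_uniq andbT; apply/hasPn => v; rewrite mem_iota.
  by case/andP=> mv _; apply/negP => /s_lt; lia.
apply/allP => v; rewrite mem_cat mem_iota => /orP[/s_lt|]; lia.
Qed.

Lemma card_verts_U_T s : uniq s -> all (fun a => a < 7) s ->
  #|verts s :|: Tset| = size s + k.+2.
Proof. by move=> s_uniq s_lt; rewrite card_verts_U_iota // /n_vertices; lia. Qed.

Lemma card_verts_U_X s : uniq s -> all (fun a => a < 7) s ->
  #|verts s :|: Xset| = size s + k.
Proof.
move=> s_uniq /allP s_lt; rewrite card_verts_U_iota //.
by apply/allP => a /s_lt; lia.
Qed.

Definition nonadj (s t : seq nat) := all (fun a => all (fun b => ~~ adj a b) t) s.
Definition clique_seq (s : seq nat) := all (fun a => all (fun b => (a == b) || adj a b) s) s.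

Lemma nonadj_verts s t x y : nonadj s t -> x \in verts s -> y \in verts t -> ~~ G x y.
Proof. by move=> /allP st; rewrite !inE => /st /allP + yt; apply. Qed.

Lemma stable_verts s : nonadj s s -> stableS G (verts s).
Proof. by move=> ss x y; apply: nonadj_verts. Qed.

Lemma clique_verts s : clique_seq s -> cliqueS G (verts s).
Proof.
move=> /allP ss x y; rewrite !inE => /ss /allP + ys xy => /(_ _ ys).
by rewrite val_eqE (negbTE xy).
Qed.

Lemma adj_verts s t x y : all (fun a => all (adj a) t) s ->
  x \in verts s -> y \in verts t -> G x y.
Proof. by move=> /allP st; rewrite !inE => /st /allP + yt; apply. Qed.

Lemma disjoint_verts s t : all (fun a => a \notin t) s -> [disjoint verts s & verts t].
Proof.
move=> /allP st; rewrite disjoint_subset; apply/subsetP => x.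
by rewrite !inE => /st.
Qed.

Lemma verts_setD1 s (v : 'I_n_vertices) : verts s :\ v = verts [seq a <- s | a != (v : nat)].
Proof. by apply/setP => x; rewrite !inE mem_filter -val_eqE. Qed.

Lemma verts_neighbours s (v : 'I_n_vertices) :
  [set y in verts s | G v y] = verts [seq a <- s | adj v a].
Proof. by apply/setP => x; rewrite !inE mem_filter andbC. Qed.

Lemma stable_Tset : stableS G Tset.
Proof. by move=> x y; rewrite !mem_Tset => Tx Ty; rewrite /G adj_TT. Qed.

Lemma stable_Xset : stableS G Xset.
Proof. by move=> x y; rewrite !mem_Xset => Xx Xy; rewrite /G adj_XX. Qed.

Lemma stable_verts_U_T s : all (fun a => 3 <= a < 7) s -> nonadj s s ->
  stableS G (verts s :|: Tset).
Proof.
move=> /allP s_core ss; apply: stableSU G_sym (stable_verts ss) stable_Tset _.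
move=> x y; rewrite inE mem_Tset => /s_core /andP[x3 x7] Ty.
by rewrite /G adj_coreT // -leqNgt.
Qed.

Lemma stable_verts_U_X s : all (fun a => a < 7) s -> nonadj s s ->
  stableS G (verts s :|: Xset).
Proof.
move=> /allP s_core ss; apply: stableSU G_sym (stable_verts ss) stable_Xset _.
by move=> x y; rewrite inE mem_Xset => /s_core x7 Xy; rewrite /G adj_coreX.
Qed.

Definition part_of (g : nat -> nat) (x : 'I_n_vertices) : 'I_k.+3 := inord (g x).

Lemma mem_part_of (g : nat -> nat) (i : 'I_k.+3) (x : 'I_n_vertices) :
  g x < k.+3 -> (x \in part (part_of g) i) = (g x == i).
Proof. by move=> gx; rewrite inE -val_eqE /= inordK. Qed.

(* [layout tb] puts the vertices 9 + j of T and 9 + k + j of X into the part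
   3 + j, and vertex v <= 8 into the part [nth 0 tb v]. *)
Definition rung v := if v < 9 + k then v - 6 else v - 6 - k.
Definition layout (tb : seq nat) v := if v < 9 then nth 0 tb v else rung v.
Definition cell (tb : seq nat) i := [seq v <- iota 0 9 | nth 0 tb v == i].

Section Layout.
Variable tb : seq nat.
Hypothesis tb_lt3 : all (fun c => c < 3) tb.

Lemma layout_lt (x : 'I_n_vertices) : layout tb x < k.+3.
Proof.
have := nth_lt_all x tb_lt3; have := vertex_lt x.
rewrite /layout /rung; case: ifP => _; [lia | case: ifP; lia].
Qed.

Lemma part_layout_lt3 (i : 'I_k.+3) :
  i < 3 -> part (part_of (layout tb)) i = verts (cell tb i).
Proof.
move=> i3; apply/setP => x; rewrite mem_part_of ?layout_lt // !inE mem_filter mem_iota.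
rewrite /layout /rung add0n leq0n /=; case: ifP => x9; first by rewrite andbT.
by rewrite andbF; case: ifP => xk; lia.
Qed.

Lemma clique_part_layout (i : 'I_k.+3) :
  3 <= i -> cliqueS G (part (part_of (layout tb)) i).
Proof.
move=> i3 x y; rewrite !mem_part_of ?layout_lt // => xi yi.
move=> /eqP xy; have {}xy : (x : nat) <> y by move=> xy'; apply: xy; apply: ord_inj.
have ge9 z : layout tb z == i -> 9 <= z.
  by rewrite /layout; case: ltnP => // _ zi; have := nth_lt_all z tb_lt3; lia.
have x9 := ge9 _ xi; have y9 := ge9 _ yi.
move: xi yi; rewrite /G /layout /rung (leq_gtF x9) (leq_gtF y9).
have := vertex_lt x; have := vertex_lt y.
case: ifP => xT; case: ifP => yT => *.
- lia.
- by rewrite adj_TX /is_T /is_X; lia.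
- by rewrite adjC adj_TX /is_T /is_X; lia.
- lia.
Qed.

Lemma layout_EPS1 s : s <= 3 ->
  all (fun i => if i < s then nonadj (cell tb i) (cell tb i) else clique_seq (cell tb i))
      (iota 0 3) ->
  exists f : 'I_n_vertices -> 'I_k.+3, forall i : 'I_k.+3,
    (i < s -> stableS G (part f i)) /\ (s <= i -> cliqueS G (part f i)).
Proof.
move=> s3 /allP cells; exists (part_of (layout tb)) => i.
case: (ltnP i 3) => i3; last by split=> [i_s|_]; [lia | apply: clique_part_layout].
rewrite part_layout_lt3 //; have := cells i; rewrite mem_iota add0n => /(_ i3).
by case: ltnP => _ cell_i; split=> // _; [apply: stable_verts | apply: clique_verts].
Qed.

Lemma layout_cliques_plus (P : {set 'I_n_vertices} -> Prop) :
  clique_seq (cell tb 1) -> clique_seq (cell tb 2) -> P (verts (cell tb 0)) ->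
  cliques_plus G k.+3 P.
Proof.
move=> cell1 cell2 P0; exists (part_of (layout tb)) => i; split=> [/eqP i0|i_gt0].
  by rewrite part_layout_lt3 i0.
case: (ltnP i 3) => i3; last exact: clique_part_layout.
rewrite part_layout_lt3 //; apply: clique_verts.
by move: i_gt0 i3; case: (nat_of_ord i) => [|[|[|]]].
Qed.

End Layout.

Definition colour v :=
  if v < 7 then nth 0 [:: 0; 1; 0; 2; 1; 2; 0] v else if is_T v then 2 else 0.

Definition colour_class (c : nat) : {set 'I_n_vertices} :=
  match c with
  | 0 => verts [:: 0; 2; 6] :|: Xset
  | 1 => verts [:: 1; 4]
  | 2 => verts [:: 3; 5] :|: Tset
  | _ => set0
  end.

Lemma colour_lt3 v : colour v < 3.
Proof. by rewrite /colour; case: ifP => _; [apply: nth_lt_all | case: ifP]. Qed.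

Lemma mem_colour_class (x : 'I_n_vertices) : x \in colour_class (colour x).
Proof.
rewrite /colour; case: ltnP => [x7|x7].
  by case: x x7 => -[|[|[|[|[|[|[|v]]]]]]] ? // _; rewrite !inE.
have := vertex_lt x; case: ifP => xT xn /=; apply/setUP; right.
  by rewrite mem_Tset.
by rewrite mem_Xset /is_X; move: xT x7; rewrite /is_T; lia.
Qed.

Lemma stable_colour_class c : stableS G (colour_class c).
Proof.
case: c => [|[|[|c]]] /=.
- exact: stable_verts_U_X.
- exact: stable_verts.
- exact: stable_verts_U_T.
- by move=> x y; rewrite inE.
Qed.

Lemma colouring_EPS1 s : 3 <= s ->
  exists f : 'I_n_vertices -> 'I_k.+3, forall i : 'I_k.+3,
    (i < s -> stableS G (part f i)) /\ (s <= i -> cliqueS G (part f i)).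
Proof.
move=> s3; exists (part_of colour) => i.
have mem_part x : (x \in part (part_of colour) i) = (colour x == i).
  by rewrite mem_part_of // (leq_trans (colour_lt3 _)).
have part_sub : part (part_of colour) i \subset colour_class i.
  by apply/subsetP => x; rewrite mem_part => /eqP <-; apply: mem_colour_class.
split=> [_ | s_i x y]; first by apply: stableS_sub part_sub _; apply: stable_colour_class.
by rewrite mem_part => /eqP xi; have := colour_lt3 x; lia.
Qed.

Lemma EPS1_G : EPS1 G k.+3.
Proof.
move=> [//|[|[|s]]] _.
- exact: (layout_EPS1 (tb := [:: 1; 1; 2; 2; 0; 1; 0; 0; 0])).
- exact: (layout_EPS1 (tb := [:: 2; 2; 0; 1; 0; 1; 0; 1; 2])).
- exact: colouring_EPS1.
Qed.

Lemma EPS2_G : EPS2 G k.+3.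
Proof.
split.
- apply: (layout_cliques_plus (tb := [:: 1; 1; 2; 0; 0; 1; 0; 0; 2])) => //.
  exists (verts [:: 6; 7]), (verts [:: 3; 4]); split.
  + by rewrite setUC -verts_cat.
  + exact: disjoint_verts.
  + by split; [apply: stable_verts | apply: card_verts_le].
  + exact: clique_verts.
  + by move=> x y; apply: nonadj_verts.
- apply: (layout_cliques_plus (tb := [:: 1; 1; 2; 0; 0; 0; 0; 1; 2])) => //.
  exists (verts [:: 5; 6]), (verts [:: 3; 4]); split.
  + by rewrite setUC -verts_cat.
  + exact: disjoint_verts.
  + by split; [apply: clique_verts | apply: card_verts_le].
  + exact: clique_verts.
  + by move=> x y; apply: nonadj_verts.
- apply: (layout_cliques_plus (tb := [:: 1; 2; 0; 1; 1; 2; 2; 0; 0])) => //.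
  exists (verts [:: 7; 8]), (verts [:: 2]); split.
  + by rewrite setUC -verts_cat.
  + exact: disjoint_verts.
  + by split; [apply: stable_verts | apply: card_verts_le].
  + exact: clique_verts.
  + by move=> x y; apply: adj_verts.
- apply: (layout_cliques_plus (tb := [:: 0; 1; 2; 0; 0; 1; 1; 0; 2])) => //.
  right; exists (@Ordinal n_vertices 7 erefl); split.
  + by rewrite inE.
  + by rewrite verts_setD1; apply: clique_verts.
  + by rewrite verts_neighbours; apply: card_verts_le.
Qed.

Section CliquePartition.
Variable f : 'I_n_vertices -> 'I_k.+3.
Hypothesis parts_clique : forall i : 'I_k.+3, 0 < i -> cliqueS G (part f i).
Let P := part f ord0.

Lemma card_stable_meet1 U : stableS G U -> #|U :&: P| <= 1 -> #|U| <= k.+3.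
Proof.
move=> stU meet1.
exact: leq_trans (card_stable_cliques parts_clique stU) (leq_add meet1 (leqnn k.+2)).
Qed.

Lemma stable_meets_part0 U : stableS G U -> k.+3 <= #|U| -> 0 < #|U :&: P|.
Proof.
move=> stU U_big; rewrite lt0n; apply/eqP => meet0.
have := leq_trans U_big (card_stable_cliques parts_clique stU).
by rewrite meet0 ltnn.
Qed.

Lemma part0_not_clique : ~ cliqueS G P.
Proof.
move=> clP; have st := stable_verts_U_T (s := [:: 3; 6]) erefl erefl.
have := card_stable_meet1 st (card_stable_clique_le1 st clP).
by rewrite card_verts_U_T //=; lia.
Qed.

Lemma co_star_centre_T v : cliqueS G (P :\ v) -> is_T v.
Proof.
move=> clP; have v_in U : stableS G U -> k.+4 <= #|U| -> v \in U.
  move=> stU U_big; apply/negPn/negP => vU.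
  have := card_stable_meet1 stU (card_stable_clique_setD1_le1 stU clP vU).
  by move/(leq_trans U_big); rewrite ltnn.
have := v_in _ (stable_verts_U_T (s := [:: 3; 6]) erefl erefl).
have := v_in _ (stable_verts_U_T (s := [:: 4; 5]) erefl erefl).
rewrite !card_verts_U_T // => /(_ (leqnn _)) + /(_ (leqnn _)).
by rewrite !in_setU !mem_Tset !inE /is_T; lia.
Qed.

Lemma part0_not_co_star : ~ co_star G P.
Proof.
move=> [v [_ clP v_iso]]; have vT := co_star_centre_T clP.
have P_mid y : y \in P -> 3 <= y /\ ~~ is_X y.
  move=> yP; have := v_iso y yP; rewrite /G; case: (ltnP y 3) => y3.
    by rewrite adjC adj_coreT //; lia.
  by move=> vy; split=> //; apply: contraNN vy; apply: adj_TX.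
have hits s : all (fun a => a < 7) s -> nonadj s s -> uniq s -> size s = 3 ->
    exists2 x : 'I_n_vertices, (x : nat) \in s & x \in P :\ v.
  move=> s_core ss s_uniq s3; have stU := stable_verts_U_X s_core ss.
  have U_big : k.+3 <= #|verts s :|: Xset| by rewrite card_verts_U_X // s3.
  have /card_gt0P[x] := stable_meets_part0 stU U_big.
  rewrite in_setI in_setU mem_Xset [x \in verts s]inE => /andP[xs xP].
  have [x3 Xx] := P_mid x xP.
  have x_s : (x : nat) \in s by rewrite (negbTE Xx) orbF in xs.
  exists x => //; rewrite in_setD1 xP andbT.
  by apply: contraTneq vT => <-; have := allP s_core _ x_s; rewrite /is_T; lia.
have [x x_s xP] := hits [:: 0; 2; 6] erefl erefl erefl erefl.
have [y y_s yP] := hits [:: 1; 2; 4] erefl erefl erefl erefl.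
have mid z : z \in P :\ v -> 3 <= z by rewrite in_setD1 => /andP[_ /P_mid[]].
have x6 : x = 6 :> nat by move: x_s (mid x xP); rewrite !inE; lia.
have y4 : y = 4 :> nat by move: y_s (mid y yP); rewrite !inE; lia.
suff : G x y by rewrite /G x6 y4.
by apply: clP => //; apply/eqP => xy; move: x6 y4; rewrite xy => ->.
Qed.

End CliquePartition.

Lemma EPS3_G : EPS3 G k.+3.
Proof.
move=> [f parts]; have cl (i : 'I_k.+3) : 0 < i -> cliqueS G (part f i) by case: (parts i).
by case: (parts ord0) => /(_ erefl) [/(part0_not_clique cl) | /(part0_not_co_star cl)].
Qed.

End Construction.

Theorem theorem3p12 :
  forall N : nat, exists n : nat, N <= n /\
    exists e : rel 'I_n, simple_graph e /\ EPS_graph e.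
Proof.
move=> N; exists (n_vertices N); split; first by rewrite /n_vertices; lia.
exists (@G N); split; first exact: simple_G.
by exists N.+3; split; [| exact: EPS1_G | exact: EPS2_G | exact: EPS3_G].
Qed.
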